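(* For every non-negative integer $k$ and every proper $4$-coloring $\varphi$ of $G_k$, we have $\varphi(v_{(k,1)})=\varphi(v_{(0,1)})$ and $\varphi(v_{(k,2)})=\varphi(v_{(0,2)})$.
   Context: The planar graphs $G_k$ are defined inductively. $G_0$ has vertex set $\{v_{(0,1)},v_{(0,2)}\}$ and the single edge $\{v_{(0,1)},v_{(0,2)}\}$. For $i\ge 1$, $G_i$ is obtained from $G_{i-1}$ by adding, for each $j\in\{1,2\}$, four new vertices $a_{(i,j)},b_{(i,j)},c_{(i,j)},v_{(i,j)}$ and the edges $\{a_{(i,j)},b_{(i,j)}\},\{b_{(i,j)},c_{(i,j)}\},\{c_{(i,j)},a_{(i,j)}\}$, $\{a_{(i,j)},v_{(i,j)}\},\{b_{(i,j)},v_{(i,j)}\},\{c_{(i,j)},v_{(i,j)}\}$, $\{a_{(i,j)},v_{(i-1,j)}\},\{b_{(i,j)},v_{(i-1,j)}\},\{c_{(i,j)},v_{(i-1,j)}\}$. A proper $4$-coloring is a map $V(G_k)\to\{1,2,3,4\}$ giving adjacent vertices different colors. *)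

From mathcomp Require Import all_boot.
Set Implicit Arguments. Unset Strict Implicit. Unset Printing Implicit Defensive.

(* Index j ∈ {1,2} is encoded by 'I_2 (0 ↔ 1, 1 ↔ 2). *)
Inductive vtx : Type :=
  | Vv : nat -> 'I_2 -> vtx
  | Va : nat -> 'I_2 -> vtx
  | Vb : nat -> 'I_2 -> vtx
  | Vc : nat -> 'I_2 -> vtx.

Definition in_G (k : nat) (x : vtx) : Prop :=
  match x with
  | Vv i _ => i <= k
  | Va i _ | Vb i _ | Vc i _ => 1 <= i <= k
  end.

Definition edge_G (k : nat) (x y : vtx) : Prop :=
  (x = Vv 0 ord0 /\ y = Vv 0 (@Ordinal 2 1 isT)) \/
  exists i j, 1 <= i <= k /\
    ((x = Va i j /\ y = Vb i j) \/ (x = Vb i j /\ y = Vc i j) \/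
     (x = Vc i j /\ y = Va i j) \/
     (x = Va i j /\ y = Vv i j) \/ (x = Vb i j /\ y = Vv i j) \/
     (x = Vc i j /\ y = Vv i j) \/
     (x = Va i j /\ y = Vv i.-1 j) \/ (x = Vb i j /\ y = Vv i.-1 j) \/
     (x = Vc i j /\ y = Vv i.-1 j)).

(* a proper 4-colouring of G_k: colours 'I_4 (standing for {1,2,3,4}),
   defined on the vertex set of G_k *)
Definition proper4 (k : nat) (phi : vtx -> 'I_4) : Prop :=
  forall x y, edge_G k x y -> phi x <> phi y.

From mathcomp Require Import all_boot.

(* The gadget a_(i,j), b_(i,j), c_(i,j) is a triangle, so it uses three
   distinct colours; v_(i-1,j) and v_(i,j) are both adjacent to all three
   vertices of the triangle, so with only four colours they both receive the
   remaining one.  Induction on i then propagates the colour of v_(0,j). *)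

Lemma eq_off_triangle (T : finType) (a b c x y : T) : #|T| <= 4 ->
  a != b -> b != c -> c != a ->
  x != a -> x != b -> x != c -> y != a -> y != b -> y != c -> x = y.
Proof.
move=> card_T ab bc ca xa xb xc ya yb yc; apply/eqP; apply: contraTT card_T => xy.
have uniq_abcxy : uniq [:: a; b; c; x; y].
  by rewrite /= !inE !negb_or ab bc xy (eq_sym a c) ca !(eq_sym _ x) !(eq_sym _ y) xa xb xc ya yb yc.
by rewrite -ltnNge (leq_trans _ (max_card (mem [:: a; b; c; x; y]))) // (card_uniqP uniq_abcxy).
Qed.

Lemma proper4_v_step {k : nat} {phi : vtx -> 'I_4} {i : nat} {j : 'I_2} :
  proper4 k phi -> 0 < i <= k -> phi (Vv i j) = phi (Vv i.-1 j).
Proof.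
move=> proper_phi i_range.
have adj x y : edge_G k x y \/ edge_G k y x -> phi x != phi y.
  by case=> /proper_phi; [|move/nesym] => /eqP.
apply: (@eq_off_triangle _ (phi (Va i j)) (phi (Vb i j)) (phi (Vc i j)));
  rewrite ?card_ord //.
all: by apply: adj; (left + right); right; exists i, j; split=> //; tauto.
Qed.

Lemma proper4_v_eq_v0 {k : nat} {phi : vtx -> 'I_4} {i : nat} {j : 'I_2} :
  proper4 k phi -> i <= k -> phi (Vv i j) = phi (Vv 0 j).
Proof.
move=> proper_phi; elim: i => [//|i IHi] lt_ik.
by rewrite (proper4_v_step proper_phi) ?lt_ik // IHi // ltnW.
Qed.

Theorem lemma6p1 (k : nat) (phi : vtx -> 'I_4) :
  proper4 k phi ->
  phi (Vv k ord0) = phi (Vv 0 ord0) /\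
  phi (Vv k (@Ordinal 2 1 isT)) = phi (Vv 0 (@Ordinal 2 1 isT)).
Proof. by move=> proper_phi; split; apply: proper4_v_eq_v0 proper_phi _. Qed.
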